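(* Let $0<\varepsilon\le1/2$, $q\in(0,1]$ and let $(G_n)$ be an expander sequence. Let each $\tilde G_n$ be obtained by deleting edges of $G_n$ such that each vertex keeps at least a $(1/2+\varepsilon)$ fraction of its edges, and let $I_t=I_t^{(pull)}$ for pull on $\tilde G_n$. Let further $q\in(0,1)$ and $|I_t|\le n/2$. Then for $\tau=-\log n/\log(1-q)$ and all $c<1$, whp $|I_{t+c\tau}|<n$.
   Context: pull protocol: in each synchronous round every uninformed vertex chooses a neighbour independently and uniformly at random, and if that neighbour is informed and the transmission succeeds (independently with probability $q$), the asking vertex becomes informed. $I_t$ is the set of vertices informed at the beginning of round $t$; probabilities are conditional on $I_t$. An expander sequence is a sequence $(G_n)$ of connected graphs, $G_n$ on $n$ vertices with minimum degree $\delta_n$, maximum degree $\Delta_n$, and $\lambda_n=\max\{|\mu_2|,|\mu_n|\}$ (adjacency eigenvalues), with $\Delta_n/\delta_n=1+o(1)$ and $\lambda_n=o(\Delta_n)$. ''Keeps at least a $(1/2+\varepsilon)$ fraction'' means $d_{\tilde G_n}(v)\ge(1/2+\varepsilon)d_{G_n}(v)$. whp means with probability $1-o(1)$ as $n\to\infty$; natural log. *)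

From HB Require Import structures.
From mathcomp Require Import all_boot all_order all_algebra.
From mathcomp Require Import all_classical all_reals all_analysis.
Set Implicit Arguments. Unset Strict Implicit. Unset Printing Implicit Defensive.
Import Order.TTheory GRing.Theory Num.Theory.
Local Open Scope ring_scope.

Section Pull.
Variable R : realType.
Variable V : finType.

Definition deg (e : rel V) (v : V) : nat := #|[set u | e v u]|.

Definition max_deg (e : rel V) : nat := \max_(v : V) deg e v.
Definition min_deg (e : rel V) : nat := \big[minn/#|V|]_(v : V) deg e v.

(* Law of the local randomness of vertex v in one round: a neighbour u
   chosen uniformly at random and a transmission coin b that succeeds
   (b = true) with probability q, independently.  (A vertex of degree 0
   makes a dummy choice that never informs it.) *)
Definition pull_weight (e : rel V) (q : R) (v : V) (o : V * bool) : R :=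
  if deg e v == 0%N then ((o.1 == v) && ~~ o.2)%:R
  else (e v o.1)%:R / (deg e v)%:R * (if o.2 then q else 1 - q).

Definition pull_step (e : rel V) (I : {set V}) (f : {ffun V -> V * bool})
  : {set V} :=
  I :|: [set v | [&& v \notin I, e v (f v).1, (f v).1 \in I & (f v).2]].

Definition pull_trans (e : rel V) (q : R) (I J : {set V}) : R :=
  \sum_(f : {ffun V -> V * bool} | pull_step e I f == J)
     \prod_(v : V) pull_weight e q v (f v).

(* pull_dist e q k I J = P(I_{t+k} = J | I_t = I) *)
Fixpoint pull_dist (e : rel V) (q : R) (k : nat) (I J : {set V}) : R :=
  match k with
  | 0%N => (J == I)%:R
  | k'.+1 => \sum_(K : {set V}) pull_dist e q k' I K * pull_trans e q K J
  end.

End Pull.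

Definition adj_mx (R : realType) (n : nat) (e : rel 'I_n) : 'M[R]_n :=
  \matrix_(i, j) (e i j)%:R.

(* l = max(|mu_2|, |mu_n|) where mu_1 >= ... >= mu_n are the adjacency
   eigenvalues (with multiplicity), i.e. the roots of the char. polynomial *)
Definition is_lambda (R : realType) (n : nat) (e : rel 'I_n) (l : R) : Prop :=
  exists s : seq R,
    [/\ sorted (fun x y : R => y <= x) s, size s = n,
        char_poly (adj_mx R e) = \prod_(x <- s) ('X - x%:P)
      & l = Num.max `|s`_1| `|s`_(n.-1)|].

Definition pull_tau (R : realType) (q : R) (n : nat) : R :=
  - ln (n%:R : R) / ln (1 - q).

(* For a set U of vertices and j rounds to go, consider the potential
   Phi_j(J) = prod_{v in U, v not in J} (1 - (1-q)^j).  An uninformed vertex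
   pulls successfully in one round with probability at most q, independently
   of the other vertices, so E[Phi_j(I_{s+1}) | I_s = K] <= Phi_{j+1}(K).
   Iterating from Phi_0(J) = [U \subset J] with U the vertices uninformed at
   time t gives P(I_{t+k} = V) <= (1 - (1-q)^k)^{|U|} <= 1/(1 + |U|(1-q)^k).
   For k <= c tau we have (1-q)^k >= n^{-c}, and |U| >= n/2, so this is
   O(1/ln n). *)

From HB Require Import structures.
From mathcomp Require Import all_boot all_order all_algebra.
From mathcomp Require Import all_classical all_reals all_analysis.
From mathcomp Require Import lra.
Set Implicit Arguments. Unset Strict Implicit. Unset Printing Implicit Defensive.
Import Order.TTheory GRing.Theory Num.Theory numFieldNormedType.Exports.
Local Open Scope ring_scope.

Section PullChain.
Variables (R : realType) (V : finType) (e : rel V) (q : R).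
Hypotheses (q_ge0 : 0 <= q) (q_le1 : q <= 1).

Lemma sum_rel_deg v : \sum_(u : V) (e v u)%:R = (deg e v)%:R :> R.
Proof.
rewrite (eq_bigr (fun u => if e v u then 1 else 0)); last by move=> u _; case: (e v u).
rewrite -big_mkcond sumr_const /deg.
by congr (_ *+ _); apply: eq_card => u; rewrite inE.
Qed.

Lemma pull_weight_ge0 v o : 0 <= pull_weight e q v o.
Proof.
rewrite /pull_weight; case: ifP => _ //.
by apply: mulr_ge0; [exact: divr_ge0 | case: o.2; rewrite ?subr_ge0].
Qed.

Lemma sum_pull_weight_if v (a b : R) :
  \sum_o pull_weight e q v o * (if o.2 then a else b) =
  if deg e v == 0%N then b else q * a + (1 - q) * b.
Proof.
rewrite -(pair_big xpredT xpredT (fun u (s : bool) =>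
   pull_weight e q v (u, s) * (if s then a else b))) /=.
under eq_bigr => u _ do rewrite big_bool /=.
rewrite /pull_weight; case: ifP => deg0.
  under eq_bigr => u _ do rewrite andbF andbT mul0r add0r.
  by rewrite (bigD1 v) //= eqxx mul1r big1 ?addr0 // => u /negbTE ->; rewrite mul0r.
under eq_bigr => u _ do rewrite -!mulrA -mulrDr.
rewrite -mulr_suml sum_rel_deg -mulrDr mulrA mulfV ?mul1r //.
by rewrite pnatr_eq0 deg0.
Qed.

Lemma sum_pull_weight v : \sum_o pull_weight e q v o = 1.
Proof.
transitivity (\sum_o pull_weight e q v o * (if o.2 then 1 else 1)).
  by apply: eq_bigr => o _; case: o.2; rewrite mulr1.
by rewrite sum_pull_weight_if; case: ifP => _ //; rewrite !mulr1 addrC subrK.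
Qed.

Lemma sum_pull_weight_success v :
  \sum_o pull_weight e q v o * (if o.2 then 1 else 0) <= q.
Proof. by rewrite sum_pull_weight_if; case: ifP => _ //; rewrite mulr1 mulr0 addr0. Qed.

Lemma pull_trans_ge0 K J : 0 <= pull_trans e q K J.
Proof.
by apply: sumr_ge0 => f _; apply: prodr_ge0 => v _; apply: pull_weight_ge0.
Qed.

Lemma sum_pull_trans_mul K (phi : {set V} -> R) :
  \sum_J pull_trans e q K J * phi J =
  \sum_(f : {ffun V -> V * bool})
     (\prod_v pull_weight e q v (f v)) * phi (pull_step e K f).
Proof.
rewrite (partition_big (pull_step e K) xpredT) //=.
apply: eq_bigr => J _; rewrite /pull_trans mulr_suml.
by apply: eq_bigr => f /eqP ->.
Qed.

Lemma sum_pull_trans K : \sum_J pull_trans e q K J = 1.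
Proof.
under eq_bigr => J _ do rewrite -[pull_trans _ _ _ _]mulr1.
rewrite sum_pull_trans_mul.
under eq_bigr => f _ do rewrite mulr1.
rewrite -(bigA_distr_bigA (pull_weight e q)) /=.
by apply: big1 => v _; apply: sum_pull_weight.
Qed.

Lemma pull_dist_ge0 k I J : 0 <= pull_dist e q k I J.
Proof.
elim: k J => [|k IH] J /=; first by case: (J == I).
by apply: sumr_ge0 => K _; apply: mulr_ge0 => //; apply: pull_trans_ge0.
Qed.

Lemma sum_pull_dist k I : \sum_J pull_dist e q k I J = 1.
Proof.
elim: k => [|k IH] /=.
  by rewrite (bigD1 I) //= eqxx big1 ?addr0 // => J /negbTE ->.
rewrite exchange_big /= -[RHS]IH; apply: eq_bigr => K _.
by rewrite -mulr_sumr sum_pull_trans mulr1.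
Qed.

Lemma sum_pull_dist_not_full k I :
  \sum_(J : {set V} | (#|J| < #|V|)%N) pull_dist e q k I J =
  1 - pull_dist e q k I [set: V].
Proof.
have full_set : (fun J : {set V} => ~~ (#|J| < #|V|)%N) =1 pred1 [set: V].
  by move=> J /=; rewrite -leqNgt eqEcard finset.subsetT cardsT.
rewrite -(sum_pull_dist k I) (bigID (fun J : {set V} => (#|J| < #|V|)%N) predT).
by rewrite (big_pred1 _ full_set) addrK.
Qed.

Local Notation p := (1 - q).

Lemma expr_1Bq_ge0 j : 0 <= p ^+ j.
Proof. by rewrite exprn_ge0 // subr_ge0. Qed.

Lemma subr_expr_1Bq_ge0 j : 0 <= 1 - p ^+ j.
Proof. by rewrite subr_ge0 exprn_ile1 // ?subr_ge0 // lerBlDr lerDl. Qed.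

Definition pull_potential (U : {set V}) (j : nat) (J : {set V}) : R :=
  \prod_(v in U) (if v \in J then 1 else 1 - p ^+ j).

Lemma pull_potential_ge0 U j J : 0 <= pull_potential U j J.
Proof.
by apply: prodr_ge0 => v _; case: ifP => _ //; apply: subr_expr_1Bq_ge0.
Qed.

Lemma sum_pull_weight_pull_le v (K : {set V}) j :
  \sum_o pull_weight e q v o *
     (if [&& e v o.1, o.1 \in K & o.2] then 1 else 1 - p ^+ j) <= 1 - p ^+ j.+1.
Proof.
apply: (@le_trans _ _ (\sum_o pull_weight e q v o *
   ((1 - p ^+ j) + p ^+ j * (if o.2 then 1 else 0)))).
  apply: ler_sum => o _; apply: ler_wpM2l; first exact: pull_weight_ge0.
  case: ifP => [/and3P [_ _ ->]|_]; first by rewrite mulr1 subrK.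
  by rewrite lerDl mulr_ge0 ?expr_1Bq_ge0 //; case: o.2.
under eq_bigr => o _ do rewrite mulrDr mulrCA.
rewrite big_split /= -mulr_suml -mulr_sumr sum_pull_weight mul1r.
apply: (@le_trans _ _ (1 - p ^+ j + p ^+ j * q)).
  by rewrite lerD2l ler_wpM2l ?expr_1Bq_ge0 ?sum_pull_weight_success.
by rewrite exprSr; lra.
Qed.

Lemma sum_pull_trans_potential_le U K j :
  \sum_J pull_trans e q K J * pull_potential U j J <= pull_potential U j.+1 K.
Proof.
pose g v (o : V * bool) : R := if v \in U then
  (if (v \in K) || [&& e v o.1, o.1 \in K & o.2] then 1 else 1 - p ^+ j) else 1.
have potential_step f : pull_potential U j (pull_step e K f) = \prod_v g v (f v).
  rewrite /pull_potential big_mkcond; apply: eq_bigr => v _; rewrite /g.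
  by case: (v \in U) => //; rewrite /pull_step !inE; case: (v \in K).
rewrite sum_pull_trans_mul.
under eq_bigr => f _ do rewrite potential_step -big_split /=.
rewrite -(bigA_distr_bigA (fun v o => pull_weight e q v o * g v o)) /=.
rewrite /pull_potential [X in _ <= X]big_mkcond /=.
apply: ler_prod => v _; apply/andP; split.
  apply: sumr_ge0 => o _; rewrite mulr_ge0 ?pull_weight_ge0 // /g.
  by case: ifP => _ //; case: ifP => _ //; apply: subr_expr_1Bq_ge0.
rewrite /g; case: (v \in U); last by under eq_bigr do rewrite mulr1; rewrite sum_pull_weight.
case: (v \in K) => /=; last exact: sum_pull_weight_pull_le.
by under eq_bigr do rewrite mulr1; rewrite sum_pull_weight.
Qed.

Lemma sum_pull_dist_potential_le U k j I :
  \sum_J pull_dist e q k I J * pull_potential U j J <= pull_potential U (j + k) I.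
Proof.
elim: k j => [|k IH] j /=.
  rewrite addn0 (bigD1 I) //= eqxx mul1r big1 ?addr0 // => J /negbTE ->.
  by rewrite mul0r.
under eq_bigr => J _ do rewrite mulr_suml.
rewrite exchange_big /= addnS -addSn; apply: le_trans (IH j.+1).
apply: ler_sum => K _; under eq_bigr => J _ do rewrite -mulrA.
by rewrite -mulr_sumr ler_wpM2l ?pull_dist_ge0 ?sum_pull_trans_potential_le.
Qed.

Lemma pull_dist_full_le k I :
  pull_dist e q k I [set: V] <= (1 - p ^+ k) ^+ #|~: I|.
Proof.
have potential_start : pull_potential (~: I) k I = (1 - p ^+ k) ^+ #|~: I|.
  rewrite /pull_potential -prodr_const.
  by apply: eq_bigr => v; rewrite inE => /negbTE ->.
rewrite -potential_start; apply: le_trans (sum_pull_dist_potential_le _ _ 0 _).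
rewrite (bigD1 [set: V]) //= /pull_potential big1 => [|v _]; last by rewrite inE.
rewrite mulr1 lerDl; apply: sumr_ge0 => J _.
by rewrite mulr_ge0 ?pull_dist_ge0 ?pull_potential_ge0.
Qed.

End PullChain.

Section PullTau.
Variable R : realType.

Lemma expr_1Bx_le_inv (x : R) m :
  0 <= x <= 1 -> (1 - x) ^+ m <= (1 + m%:R * x)^-1.
Proof.
move=> /andP [x_ge0 x_le1].
have mx_gt0 : 0 < 1 + m%:R * x by rewrite ltr_pwDl ?mulr_ge0.
rewrite -div1r ler_pdivlMr //; elim: m {mx_gt0} => [|m IH].
  by rewrite expr0 mul0r addr0 mul1r.
apply: le_trans IH; rewrite exprS -natr1.
have y_ge0 : 0 <= (1 - x) ^+ m by rewrite exprn_ge0 // subr_ge0.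
set y := (1 - x) ^+ m in y_ge0 *.
have : 0 <= y * (m%:R + 1) * x * x by rewrite !mulr_ge0 // addr_ge0.
nra.
Qed.

Lemma ln_natr_ge0 n : 0 <= ln (n%:R : R).
Proof. by case: n => [|n]; [rewrite ln0 | rewrite ln_ge0 // ler1n]. Qed.

Lemma ln_natr_ge_truncn_expR (L : R) n :
  ((Num.truncn (expR L)).+1 <= n)%N -> L <= ln (n%:R : R).
Proof.
move=> n_large.
have expR_lt_n : expR L < n%:R by apply: lt_le_trans (truncnS_gt _) _; rewrite ler_nat.
by rewrite -ler_expR lnK ?posrE ?(lt_trans (expR_gt0 L)) // ltW.
Qed.

Variables (q c : R).
Hypotheses (q_gt0 : 0 < q) (q_lt1 : q < 1).

Let ln_1Bq_lt0 : ln (1 - q) < 0.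
Proof. by rewrite ln_lt0 // subr_gt0 q_lt1 ltrBlDr ltrDl. Qed.

Lemma pull_tau_mul_ln n : pull_tau q n * ln (1 - q) = - ln (n%:R : R).
Proof. by rewrite /pull_tau divfK // lt_eqF. Qed.

Lemma pull_tau_ge0 n : 0 <= pull_tau q n.
Proof.
by rewrite /pull_tau mulr_le0 ?oppr_le0 ?ln_natr_ge0 // invr_le0 ltW.
Qed.

(* [truncn] vanishes on negative reals, hence only [max c 0] matters. *)
Lemma expR_le_expr_truncn_tau n :
  expR (- Num.max c 0 * ln (n%:R : R)) <= (1 - q) ^+ Num.truncn (c * pull_tau q n).
Proof.
set c' := Num.max c 0; set k := Num.truncn _.
have k_le : k%:R <= c' * pull_tau q n.
  have c'tau_ge0 : 0 <= c' * pull_tau q n by rewrite mulr_ge0 ?le_max ?lexx ?orbT ?pull_tau_ge0.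
  apply: le_trans (_ : (Num.truncn (c' * pull_tau q n))%:R <= _); last by rewrite truncn_le.
  by rewrite ler_nat le_truncn // ler_wpM2r ?pull_tau_ge0 // le_max lexx.
rewrite -[X in _ <= X]lnK ?posrE ?exprn_gt0 ?subr_gt0 // ler_expR lnXn ?subr_gt0 //.
by rewrite -[_ *+ k]mulr_natr mulNr -mulrN -pull_tau_mul_ln mulrA mulrC ler_wnM2l // ltW.
Qed.

Lemma natr_mul_expr_truncn_tau_ge n : (0 < n)%N ->
  1 + (1 - Num.max c 0) * ln (n%:R : R) <=
  n%:R * (1 - q) ^+ Num.truncn (c * pull_tau q n).
Proof.
move=> n_gt0; apply: le_trans (expR_ge1Dx _) _.
rewrite mulrBl mul1r expRD lnK ?posrE ?ltr0n // -mulNr.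
by rewrite ler_wpM2l ?expR_le_expr_truncn_tau.
Qed.

Lemma pull_dist_full_tau_le (V : finType) (e : rel V) (I : {set V}) :
  c <= 1 -> (0 < #|V|)%N -> #|I|%:R <= #|V|%:R / 2 :> R ->
  pull_dist e q (Num.truncn (c * pull_tau q #|V|)) I [set: V] <=
  2 / (1 + (1 - Num.max c 0) * ln (#|V|%:R : R)).
Proof.
move=> c_le1 V_gt0 I_half; set k := Num.truncn _; set x := (1 - q) ^+ k.
have p_ge0 : 0 <= 1 - q by rewrite subr_ge0 ltW.
have p_le1 : 1 - q <= 1 by rewrite lerBlDr lerDl ltW.
have x_ge0 : 0 <= x by rewrite exprn_ge0.
have x_le1 : x <= 1 by rewrite exprn_ile1.
have c'_le1 : 0 <= 1 - Num.max c 0 by rewrite subr_ge0 ge_max ler01 c_le1.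
apply: le_trans (pull_dist_full_le e (ltW q_gt0) (ltW q_lt1) k I) _.
apply: le_trans (expr_1Bx_le_inv _ _) _; first by rewrite x_ge0 x_le1.
have half_le : #|V|%:R / 2 <= #|~: I|%:R :> R.
  by move/(congr1 (fun a => a%:R : R)): (cardsC I); rewrite natrD; lra.
have := natr_mul_expr_truncn_tau_ge V_gt0; rewrite -/k -/x => nx_ge.
have := ler_wpM2r x_ge0 half_le.
rewrite invf_ple ?posrE ?divr_gt0 ?ltr_pwDl ?mulr_ge0 ?ln_natr_ge0 // invf_div.
lra.
Qed.
End PullTau.

Local Open Scope classical_set_scope.
Local Open Scope ring_scope.

Theorem lemma3p3 (R : realType) (eps q c : R)
  (G Gt : forall n : nat, rel 'I_n) (I0 : forall n : nat, {set 'I_n}) :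
  0 < eps -> eps <= 1 / 2 -> 0 < q -> q < 1 -> c < 1 ->
  (* (G_n) is an expander sequence *)
  (forall n, [/\ symmetric (G n), irreflexive (G n)
               & forall u v, connect (G n) u v]) ->
  ((fun n => ((max_deg (G n))%:R / (min_deg (G n))%:R : R)) @ \oo --> (1 : R)) ->
  (exists lam : nat -> R,
      (forall n, (2 <= n)%N -> is_lambda (G n) (lam n)) /\
      ((fun n => lam n / (max_deg (G n))%:R) @ \oo --> (0 : R))) ->
  (* tilde G_n obtained by deleting edges, keeping a (1/2+eps) fraction *)
  (forall n, [/\ symmetric (Gt n), subrel (Gt n) (G n)
               & forall v, (1 / 2 + eps) * (deg (G n) v)%:R <= (deg (Gt n) v)%:R]) ->
  (* |I_t| <= n/2 *)
  (forall n, (#|I0 n|%:R : R) <= n%:R / 2) ->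
  (fun n => \sum_(J : {set 'I_n} | (#|J| < n)%N)
      pull_dist (Gt n) q (Num.truncn (c * pull_tau q n)) (I0 n) J)
    @ \oo --> (1 : R).
Proof.
move=> _ _ q_gt0 q_lt1 c_lt1 _ _ _ _ I0_half.
have c'_gap : 0 < 1 - Num.max c 0 by rewrite subr_gt0 gt_max c_lt1 ltr01.
apply/cvgrPdist_le => ee ee_gt0.
exists (Num.truncn (expR (2 / ((1 - Num.max c 0) * ee)))).+1 => // n /= n_large.
have n_gt0 : (0 < n)%N by case: n n_large.
have := sum_pull_dist_not_full (Gt n) q (Num.truncn (c * pull_tau q n)) (I0 n).
rewrite card_ord => ->; rewrite subKr ger0_norm ?pull_dist_ge0 ?(ltW q_gt0) ?(ltW q_lt1) //.
have := pull_dist_full_tau_le q_gt0 q_lt1 (Gt n) (I := I0 n) (ltW c_lt1).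
rewrite !card_ord => /(_ n_gt0 (I0_half n)) /le_trans; apply.
have := ln_natr_ge_truncn_expR n_large.
rewrite ler_pdivrMr ?mulr_gt0 // ler_pdivrMr ?ltr_pwDl ?mulr_ge0 ?ln_natr_ge0 ?(ltW c'_gap) //.
nra.
Qed.
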